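(* Let $n$ be a positive integer and let $l=n-1$. The $n\times n$ matrices $P_1,P_2,\dots,P_{(n-1)^2},C_1,C_2,\dots,C_n$ are linearly independent.
   Context: Numbering of positions: for an $l\times l$ matrix, the position $(i,j)$ is assigned the number $i+(j-i)l \pmod{l^2}$, taken in $\{1,\dots,l^2\}$ (residue $0$ is read as $l^2$). For each integer $1\le i\le l^2$, let $A_i\in M_l$ be the $(0,1)$-matrix whose entries are all $0$ except those in the positions numbered $i,i+1,\dots,i+l-2 \pmod{l^2}$, which are $1$ (so $A_i$ has at most one $1$ in each row and column, with one zero row and one zero column). For $1\le i\le (n-1)^2$, $P_i$ is the unique $n\times n$ permutation matrix such that deleting its first row and first column yields $A_i$. For $j\in[n]$, $C_j$ is the $n\times n$ $(0,1)$-matrix whose $j$-th column consists of all $1$'s and all other entries are $0$. *)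

From HB Require Import structures.
From mathcomp Require Import all_boot all_order all_algebra all_fingroup.
Set Implicit Arguments. Unset Strict Implicit. Unset Printing Implicit Defensive.
Import Order.TTheory GRing.Theory Num.Theory.

(* Rows/columns i, j are given
   0-based (as ordinals); the paper's 1-based indices are i+1, j+1.
   The number is (i+1) + ((j+1)-(i+1)) l  mod l^2, taken in {1,...,l^2}
   (residue 0 is read as l^2). *)
Definition pos_num (l i j : nat) : nat :=
  let r := `|((i.+1%:Z + (j%:Z - i%:Z) * l%:Z) %% (l ^ 2)%:Z)%Z|%N in
  if r == 0%N then (l ^ 2)%N else r.

Definition Amx (R : pzRingType) (l k : nat) : 'M[R]_l :=
  \matrix_(i < l, j < l)
    (([exists t : 'I_(l.-1), pos_num l i j == (k + t) %[mod l ^ 2]] : nat)%:R)%R.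

Definition Cmx (R : pzRingType) (n : nat) (j : 'I_n) : 'M[R]_n :=
  \matrix_(r < n, c < n) ((c == j : nat)%:R)%R.

Definition delete_rc (R : Type) (n : nat) (i0 : 'I_n) (M : 'M[R]_n)
  : 'M[R]_n.-1 := row' i0 (col' i0 M).

From HB Require Import structures.
From mathcomp Require Import all_boot all_order all_algebra all_fingroup.
From mathcomp Require Import zify ring.
Import GRing.Theory Num.Theory.

(* Summing the relation down a column, where each permutation matrix P_k
   contributes a single 1, shows that all b_j equal one value b and that
   \sum_k a_k + n b = 0.  Deleting the first row and column leaves
   \sum_k a_k A_{k+1} = -b J; as the numbering of positions meets every residue
   mod l^2, the window sums q |-> \sum_k a_k [q in {k+1, ..., k+l-1}] are all
   equal to -b.  Comparing the window sums at q and q+1 gives a_{m+l-1} = a_m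
   (indices mod l^2), and since l-1 is coprime to l^2, a is constant, say x.
   Then -b = (l-1) x, and \sum_k a_k + n b = l^2 x - (l+1)(l-1) x = x = 0. *)

Definition in_window (N L k q : nat) : bool :=
  [exists t : 'I_L, q == k + t %[mod N]].

Lemma in_window_mod {N} L k {q q'} :
  q = q' %[mod N] -> in_window N L k q = in_window N L k q'.
Proof. by rewrite /in_window => ->. Qed.

Lemma in_windowSS N L k q : in_window N L k.+1 q.+1 = in_window N L k q.
Proof.
by apply: eq_existsb => t; rewrite addSn -addn1 -[(k + t).+1]addn1 eqn_modDr.
Qed.

Lemma in_window_sum N L k q : L <= N ->
  (in_window N L k q : nat) = \sum_(t < L) (q == k + t %[mod N] : nat).
Proof.
move=> le_LN; rewrite /in_window; apply/esym.
case: existsP => [[t /eqP qt] | no_t]; last first.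
  by apply: big1 => t _; case: eqP => // qt; case: no_t; exists t; apply/eqP.
rewrite (bigD1 t) //= qt eqxx big1 // => s ne_st.
apply/eqP; rewrite eqb0 eqn_modDl; apply: contraNN ne_st => /eqP.
have ltsN := leq_trans (ltn_ord s) le_LN.
have lttN := leq_trans (ltn_ord t) le_LN.
by rewrite !modn_small // => st; apply/eqP/val_inj.
Qed.

Lemma in_window_step N L k q : L <= N ->
  in_window N L k q + (q == k + L %[mod N])
  = (q == k %[mod N]) + in_window N L k.+1 q.
Proof.
move=> le_LN; rewrite !in_window_sum //.
rewrite -[LHS](big_ord_recr L (fun t => q == k + t %[mod N] : nat)) big_ord_recl.
by rewrite addn0; under eq_bigr do rewrite /= addnS -addSn.
Qed.

Lemma count_eqmod_shift N q s : 0 < N ->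
  \sum_(k < N) (q == k + s %[mod N] : nat) = 1.
Proof.
move=> N_gt0; pose c := Ordinal (ltn_pmod (q + s * N.-1) N_gt0).
have shiftE (k : 'I_N) : (q == k + s %[mod N]) = (k == c).
  rewrite -(eqn_modDr (s * N.-1)) -addnA -mulnS prednK //.
  rewrite [k + _]addnC modnMDl eq_sym.
  by rewrite (modn_small (ltn_ord k)); apply/eqP/eqP => [kc | -> //]; exact: val_inj.
rewrite (bigD1 c) // shiftE eqxx big1 // => k ne_kc.
by rewrite shiftE (negbTE ne_kc).
Qed.

Lemma count_in_window N L q : 0 < N -> L <= N ->
  \sum_(k < N) in_window N L k.+1 q = L.
Proof.
move=> N_gt0 le_LN; under eq_bigr do rewrite in_window_sum //.
rewrite exchange_big /= -[RHS]card_ord -sum1_card.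
apply: eq_bigr => t _.
by under eq_bigr do rewrite addSnnS; rewrite count_eqmod_shift.
Qed.

Lemma periodic_coprime_const {T : Type} (f : nat -> T) {L N : nat} :
    0 < N -> coprime L N ->
    (forall m, f (m + L) = f m) -> (forall m, f (m + N) = f m) ->
  forall m, f m = f 0.
Proof.
move=> N_gt0 coLN fL fN; have [c _] := Bezoutr L N_gt0.
rewrite (eqP coLN) => /dvdnP[d cLN].
have fLn j m : f (m + j * L) = f m.
  by elim: j => [|j IH]; rewrite ?addn0 // mulSnr addnA fL.
have fNn j m : f (m + j * N) = f m.
  by elim: j => [|j IH]; rewrite ?addn0 // mulSnr addnA fN.
by elim=> // m IH; rewrite -IH -(fLn c) -addn1 -addnA cLN fNn.
Qed.

Lemma pos_num_mod l i j : pos_num l i j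
  = `|((i.+1%:Z + (j%:Z - i%:Z) * l%:Z) %% (l ^ 2)%:Z)%Z|%N %[mod l ^ 2].
Proof. by rewrite /pos_num /=; case: eqP => [-> | //]; rewrite modnn mod0n. Qed.

Lemma pos_num_surj {l} q : 0 < l ->
  exists i j : 'I_l, pos_num l i j = q %[mod l ^ 2].
Proof.
move=> l_gt0; have N_gt0 : 0 < l ^ 2 by rewrite sqrn_gt0.
pose q' := (q + (l ^ 2).-1) %% l ^ 2.
pose d := q' %/ l; pose i := q' %% l; pose j := (i + d) %% l; pose w := (i + d) %/ l.
have lt_il : i < l by rewrite ltn_pmod.
have lt_jl : j < l by rewrite ltn_pmod.
exists (Ordinal lt_il), (Ordinal lt_jl); rewrite pos_num_mod /=.
have -> : (i.+1%:Z + (j%:Z - i%:Z) * l%:Z = (- w%:Z) * (l ^ 2)%:Z + q'.+1%:Z)%R.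
  have := divn_eq (i + d) l; have := divn_eq q' l; rewrite -/d -/i -/j -/w.
  nia.
rewrite modzMDl modz_nat absz_nat modn_mod -addn1 modnDml -addnA addn1 prednK //.
by rewrite modnDr.
Qed.

Local Open Scope ring_scope.

Section WindowSums.

Context {R : pzRingType} {N L : nat} (a : 'I_N -> R).

(* The entry of \sum_k a_k A_{k+1} at a position numbered q, for N = l^2 and
   L = l - 1. *)
Definition window_sum (q : nat) : R :=
  \sum_k a k * (in_window N L k.+1 q)%:R.

Hypotheses (N_gt0 : (0 < N)%N) (le_LN : (L <= N)%N).

Let a_mod (m : nat) : R := a (Ordinal (ltn_pmod m N_gt0)).

Lemma a_mod_eq {m m'} : m = m' %[mod N] -> a_mod m = a_mod m'.
Proof. by move=> e; congr a; apply: val_inj. Qed.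

Lemma a_mod_ord (k : 'I_N) : a_mod k = a k.
Proof. by congr a; apply: val_inj; rewrite /= modn_small. Qed.

Lemma sum_eqmod_mul q : \sum_k a k * (q == k %[mod N] : nat)%:R = a_mod q.
Proof.
rewrite (bigD1 (Ordinal (ltn_pmod q N_gt0))) //= modn_mod eqxx mulr1.
rewrite big1 ?addr0 // => k ne_k; rewrite (modn_small (ltn_ord k)).
by case: eqP => [qk | _]; [case/eqP: ne_k; apply: val_inj | rewrite mulr0].
Qed.

Lemma window_sum_step m :
  window_sum (m + L).+1 + a_mod m = window_sum (m + L) + a_mod (m + L).
Proof.
rewrite /window_sum -(sum_eqmod_mul m) -(sum_eqmod_mul (m + L)) -!big_split.
apply: eq_bigr => k _ /=; rewrite in_windowSS -!mulrDr -!natrD.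
by rewrite -[m == k %[mod N]](eqn_modDr L) in_window_step // addnC.
Qed.

Lemma a_mod_periodic :
  (forall q, window_sum q = window_sum 0) -> forall m, a_mod (m + L) = a_mod m.
Proof.
move=> Fc m; apply/esym/(addrI (window_sum 0)).
by rewrite -{1}(Fc (m + L).+1) -(Fc (m + L)) window_sum_step.
Qed.

Lemma const_window_sum_coprime : coprime L N ->
  (forall q, window_sum q = window_sum 0) -> forall k k', a k = a k'.
Proof.
move=> coLN Fc.
have a_mod0 := periodic_coprime_const a_mod N_gt0 coLN
  (a_mod_periodic Fc) (fun m => a_mod_eq (modnDr m N)).
by move=> k k'; rewrite -!a_mod_ord !a_mod0.
Qed.

Lemma window_sum_const x :
  (forall k, a k = x) -> forall q, window_sum q = x * L%:R.
Proof.
move=> ax q; rewrite /window_sum; under eq_bigr do rewrite ax.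
by rewrite -mulr_sumr -natr_sum count_in_window.
Qed.

End WindowSums.

Arguments window_sum {R N} L a q.

Lemma sum_col_perm_mx (R : pzSemiRingType) n (M : 'M[R]_n) j :
  is_perm_mx M -> \sum_i M i j = 1.
Proof.
case/is_perm_mxP => s ->; rewrite (bigD1 ((s^-1)%g j)) //= big1 => [|i ne_i].
  by rewrite !mxE permKV eqxx addr0.
by rewrite !mxE (canF_eq (permK s)) (negbTE ne_i).
Qed.

Section Independence.

Context {R : numDomainType} {l : nat} {P : 'I_(l ^ 2) -> 'M[R]_l.+1}.
Context {a : 'I_(l ^ 2) -> R} {b : 'I_l.+1 -> R}.
Hypothesis P_perm : forall k, is_perm_mx (P k).
Hypothesis P_minor : forall k, delete_rc ord0 (P k) = Amx R l k.+1.
Hypothesis comb_eq0 : \sum_k a k *: P k + \sum_j b j *: Cmx R j = 0.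

Lemma comb_entry r c : \sum_k a k * P k r c + b c = 0.
Proof.
have /matrixP/(_ r c) := comb_eq0; rewrite !mxE !summxE => E.
rewrite -[RHS]E; congr (_ + _).
  by apply: eq_bigr => k _; rewrite mxE.
rewrite (bigD1 c) //= !mxE eqxx mulr1 big1 ?addr0 // => j ne_jc.
by rewrite !mxE eq_sym (negbTE ne_jc) mulr0.
Qed.

Lemma comb_col_sum c : \sum_k a k + b c *+ l.+1 = 0.
Proof.
have : \sum_r (\sum_k a k * P k r c + b c) = 0.
  by apply: big1 => r _; apply: comb_entry.
rewrite big_split /= exchange_big sumr_const card_ord => E; rewrite -[RHS]E.
by congr (_ + _); apply: eq_bigr => k _; rewrite -mulr_sumr sum_col_perm_mx ?mulr1.
Qed.

Lemma b_const c : b c = b ord0.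
Proof.
apply: (pmulrnI (ltn0Sn l)); apply: (addrI (\sum_k a k)).
by rewrite !comb_col_sum.
Qed.

Lemma window_sum_pos_num (i j : 'I_l) :
  window_sum l.-1 a (pos_num l i j) = - b ord0.
Proof.
apply: (addIr (b (lift ord0 j))); rewrite [in RHS]b_const addNr.
rewrite -[RHS](comb_entry (lift ord0 i) (lift ord0 j)); congr (_ + _).
apply: eq_bigr => k _.
have -> : P k (lift ord0 i) (lift ord0 j) = delete_rc ord0 (P k) i j by rewrite !mxE.
by rewrite P_minor mxE.
Qed.

Lemma window_sum_eq q : (0 < l)%N -> window_sum l.-1 a q = - b ord0.
Proof.
move=> l_gt0; have [i [j e]] := pos_num_surj q l_gt0.
rewrite -(window_sum_pos_num i j); apply: eq_bigr => k _.
by rewrite (in_window_mod _ _ e).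
Qed.

Lemma a_eq0 k : a k = 0.
Proof.
have l_gt0 : (0 < l)%N by rewrite -sqrn_gt0 (leq_ltn_trans _ (ltn_ord k)).
have N_gt0 : (0 < l ^ 2)%N by rewrite sqrn_gt0.
have le_LN : (l.-1 <= l ^ 2)%N.
  by rewrite (leq_trans (leq_pred l)) // -{1}[l]expn1 leq_pexp2l.
have coLN : coprime l.-1 (l ^ 2) by rewrite coprime_pexpr // coprimePn.
have a_const k' : a k' = a k.
  apply: (const_window_sum_coprime a N_gt0 le_LN coLN) => q.
  by rewrite !window_sum_eq.
have := window_sum_const a N_gt0 le_LN _ a_const 0; rewrite window_sum_eq // => bE.
have := comb_col_sum ord0.
rewrite (eq_bigr (fun=> a k)) => [|k' _]; last exact: a_const.
rewrite sumr_const card_ord -[b ord0]opprK bE.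
have -> : (l ^ 2 = l.-1 * l.+1 + 1)%N.
  by rewrite -subn1 -[l.+1]addn1 -subn_sqr exp1n subnK // sqrn_gt0.
by move=> E; rewrite -[RHS]E; ring.
Qed.

Lemma b_eq0 j : b j = 0.
Proof.
apply: (pmulrnI (ltn0Sn l)); rewrite mul0rn -[RHS](comb_col_sum j).
by rewrite big1 ?add0r // => k _; apply: a_eq0.
Qed.

End Independence.

Theorem mainTheorem5 (R : numFieldType) (n : nat) (hn : (0 < n)%N)
    (P : 'I_((n.-1) ^ 2) -> 'M[R]_n) :
  (forall k, is_perm_mx (P k) /\
             delete_rc (Ordinal hn) (P k) = Amx R n.-1 k.+1) ->
  forall (a : 'I_((n.-1) ^ 2) -> R) (b : 'I_n -> R),
    \sum_k a k *: P k + \sum_j b j *: Cmx R j = 0 ->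
    (forall k, a k = 0) /\ (forall j, b j = 0).
Proof.
case: n hn P => // l hn P HP a b comb_eq0.
have P_perm k := proj1 (HP k).
have P_minor k : delete_rc ord0 (P k) = Amx R l k.+1.
  by rewrite -(proj2 (HP k)); congr delete_rc; apply: val_inj.
by split=> [k | j];
  [apply: (a_eq0 P_perm P_minor comb_eq0) | apply: (b_eq0 P_perm P_minor comb_eq0)].
Qed.
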